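(* Let $M,N,K$ be symmetric homogeneous bi-variate means having symmetric asymptotic expansions with coefficients $(a^M_n)$, $(a^N_n)$, $(a^K_n)$ respectively. Then the resultant mean-map $R=\mathcal R(K,N,M)$, $R(s,t)=K\big(N(s,M(s,t)),N(M(s,t),t)\big)$, has a symmetric asymptotic expansion $R(x-t,x+t)\sim\sum_{m\ge0}a^R_mt^{2m}x^{-2m+1}$ ($x\to\infty$) with $$a^R_m=\sum_{n=0}^m a^K_n\sum_{k=0}^{m-n}P[k,2n,\mathbf d]\,P[m-n-k,-2n+1,\mathbf s],\qquad m\in\mathbb N_0,$$ where $\mathbf d=(d_m)_{m\ge0}$ and $\mathbf s=(s_m)_{m\ge0}$ are $$d_m=-\frac12\sum_{n=0}^m a^N_n\sum_{k=0}^{2m+1-2n}P[k,2n,\mathbf g^M]\,P[2m+1-2n-k,-2n+1,\mathbf h^M],$$ $$s_m=\frac12\sum_{n=0}^m a^N_n\sum_{k=0}^{2m-2n}P[k,2n,\mathbf g^M]\,P[2m-2n-k,-2n+1,\mathbf h^M].$$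
   Context: A bi-variate mean is a function $M:(0,\infty)^2\to(0,\infty)$ with $\min(s,t)\le M(s,t)\le\max(s,t)$; it is symmetric if $M(s,t)=M(t,s)$ and homogeneous if $M(\lambda s,\lambda t)=\lambda M(s,t)$ for $\lambda,s,t>0$. A mean $M$ has a symmetric asymptotic expansion with coefficients $(a^M_n)_{n\ge0}$ if for every fixed real $t$ and every $N\ge0$, $M(x-t,x+t)=\sum_{n=0}^N a^M_nt^{2n}x^{-2n+1}+o(x^{-2N+1})$ as $x\to\infty$. For a sequence $\mathbf b=(b_0,b_1,\ldots)$ with $b_0\ne0$ and $r\in\mathbb R$, $P[0,r,\mathbf b]=b_0^r$ and $P[n,r,\mathbf b]=\frac1{nb_0}\sum_{k=1}^n(k(1+r)-n)b_kP[n-k,r,\mathbf b]$ for $n\ge1$ (the coefficient of $z^n$ in $(\sum_j b_jz^j)^r$). Given coefficients $(a^M_n)$, set $\mathbf g^M=(1,a^M_1,0,a^M_2,0,a^M_3,\ldots)$ (i.e. $g_0=1$, $g_{2k-1}=a^M_k$, $g_{2k}=0$ for $k\ge1$) and $\mathbf h^M=(2,-1,a^M_1,0,a^M_2,0,a^M_3,\ldots)$ (i.e. $h_0=2$, $h_1=-1$, $h_{2k}=a^M_k$, $h_{2k+1}=0$ for $k\ge1$). (One has $d_0=1/2$, $s_0=1$.) *)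

From Stdlib Require Import Reals Lra List Arith.
Open Scope R_scope.

(* A bi-variate mean on (0,oo)^2, represented as a total function R -> R -> R
   whose values matter only on positive arguments. *)
Definition is_mean (M : R -> R -> R) : Prop :=
  forall s t, 0 < s -> 0 < t ->
    0 < M s t /\ Rmin s t <= M s t /\ M s t <= Rmax s t.

Definition is_symmetric (M : R -> R -> R) : Prop :=
  forall s t, 0 < s -> 0 < t -> M s t = M t s.

Definition is_homogeneous (M : R -> R -> R) : Prop :=
  forall l s t, 0 < l -> 0 < s -> 0 < t -> M (l * s) (l * t) = l * M s t.

Definition has_sym_asymp (M : R -> R -> R) (a : nat -> R) : Prop :=
  forall (t : R) (N : nat) (eps : R), 0 < eps ->
    exists X : R, forall x : R, X < x ->
      Rabs (M (x - t) (x + t)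
            - sum_f_R0 (fun n => a n * t ^ (2 * n) * powerRZ x (1 - 2 * Z.of_nat n)%Z) N)
      <= eps * Rabs (powerRZ x (1 - 2 * Z.of_nat N)%Z).

(* P[n,r,b] : table of P[0..n] computed by the recursion
   P[0] = b_0^r, P[n] = 1/(n b_0) sum_{k=1}^n (k(1+r)-n) b_k P[n-k].
   b_0^r is Rpower (b_0 > 0 in all uses: 1, 2, 1/2, 1). *)
Fixpoint Ptab (r : R) (b : nat -> R) (n : nat) : list R :=
  match n with
  | O => (Rpower (b O) r) :: nil
  | S n' =>
      let tab := Ptab r b n' in
      tab ++ ((/ (INR (S n') * b O)) *
              sum_f_R0 (fun j => (INR (S j) * (1 + r) - INR (S n')) * b (S j)
                                  * nth (S n' - S j) tab 0) n') :: nil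
  end.

Definition P (n : nat) (r : R) (b : nat -> R) : R := nth n (Ptab r b n) 0.

(* g^M = (1, a_1, 0, a_2, 0, a_3, ...) *)
Definition gseq (a : nat -> R) (j : nat) : R :=
  match j with
  | O => 1
  | _ => if Nat.odd j then a (Nat.div2 (S j)) else 0
  end.

(* h^M = (2, -1, a_1, 0, a_2, 0, a_3, ...) *)
Definition hseq (a : nat -> R) (j : nat) : R :=
  match j with
  | O => 2
  | S O => -1
  | _ => if Nat.even j then a (Nat.div2 j) else 0
  end.

Definition dseq (aM aN : nat -> R) (m : nat) : R :=
  - / 2 * sum_f_R0 (fun n => aN n *
      sum_f_R0 (fun k => P k (2 * INR n) (gseq aM)
                       * P (2 * m + 1 - 2 * n - k) (- 2 * INR n + 1) (hseq aM))
               (2 * m + 1 - 2 * n)) m.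

Definition sseq (aM aN : nat -> R) (m : nat) : R :=
  / 2 * sum_f_R0 (fun n => aN n *
      sum_f_R0 (fun k => P k (2 * INR n) (gseq aM)
                       * P (2 * m - 2 * n - k) (- 2 * INR n + 1) (hseq aM))
               (2 * m - 2 * n)) m.

Definition resultant (K N M : R -> R -> R) (s t : R) : R :=
  K (N s (M s t)) (N (M s t) t).

From Stdlib Require Import Reals Lra Lia List Arith ZArith FunctionalExtensionality.
Open Scope R_scope.

(* By homogeneity, a symmetric asymptotic expansion of a mean Q with coefficients a is the
   same thing as a Taylor-type expansion of w |-> Q(1 - w, 1 + w) at w = 0 whose coefficients
   are a at even and 0 at odd indices. More generally, if U and V have expansions at 0 with
   U(0) > 0 and V(0) = 0, then Q(U - V, U + V) = sum_n a_n V^(2n) U^(1-2n) up to any order,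
   and the coefficients of V^(2n) U^(1-2n) are Cauchy products of P[., 2n, .] and
   P[., 1-2n, .], because P[., r, b] is the coefficient sequence of (sum_j b_j z^j)^r
   (Miller's recurrence). Writing the arguments of the inner N as U -+ V with
   U, V = (M(1-z,1+z) +- (1-z)) / 2 gives the coefficients s_m, -d_m of N(1-z, M(1-z,1+z));
   the symmetry z |-> -z gives those of N(M(1-z,1+z), 1+z), and a second application, to K
   with half sum and half difference of the two inner means, gives the coefficients a^R. *)

Lemma sum_f_R0_scal_l (f : nat -> R) (c : R) N :
  sum_f_R0 (fun i => c * f i) N = c * sum_f_R0 f N.
Proof. induction N; simpl; [ring | rewrite IHN; ring]. Qed.

Lemma sum_f_R0_scal_r (f : nat -> R) (c : R) N :
  sum_f_R0 (fun i => f i * c) N = sum_f_R0 f N * c.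
Proof. induction N; simpl; [ring | rewrite IHN; ring]. Qed.

Lemma sum_f_R0_vanish_above F L A : (forall n, (L < n)%nat -> F n = 0) -> (L <= A)%nat ->
  sum_f_R0 F A = sum_f_R0 F L.
Proof.
  intros H HA; induction A.
  - assert (L = 0%nat) by lia; subst; auto.
  - destruct (Nat.eq_dec L (S A)) as [->|]; auto.
    simpl. rewrite IHA, H by lia. ring.
Qed.

Lemma sum_f_R0_double_S F m : (forall i, F (2 * i + 1)%nat = 0) ->
  sum_f_R0 F (2 * m + 1) = sum_f_R0 (fun i => F (2 * i)%nat) m.
Proof.
  intros H. induction m.
  - pose proof (H 0%nat) as H0; simpl in *. rewrite H0. ring.
  - replace (2 * S m + 1)%nat with (S (S (2 * m + 1))) by lia.
    cbn [sum_f_R0]. rewrite IHm.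
    replace (S (S (2 * m + 1))) with (2 * S m + 1)%nat by lia. rewrite H.
    replace (S (2 * m + 1)) with (2 * S m)%nat by lia. ring.
Qed.

Lemma sum_f_R0_double F m : (forall i, F (2 * i + 1)%nat = 0) ->
  sum_f_R0 F (2 * m) = sum_f_R0 (fun i => F (2 * i)%nat) m.
Proof.
  intros H. destruct m; [reflexivity|].
  replace (2 * S m)%nat with (S (2 * m + 1)) by lia. cbn [sum_f_R0].
  rewrite sum_f_R0_double_S by auto.
  replace (S (2 * m + 1)) with (2 * S m)%nat by lia. reflexivity.
Qed.

Lemma Rle_pow_le1 x m n : 0 <= x <= 1 -> (m <= n)%nat -> x ^ n <= x ^ m.
Proof.
  intros Hx Hmn. replace n with (m + (n - m))%nat by lia. rewrite pow_add.
  rewrite <- (Rmult_1_r (x ^ m)) at 2. apply Rmult_le_compat_l.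
  - apply pow_le; lra.
  - rewrite <- (pow1 (n - m)). apply pow_incr; lra.
Qed.

Lemma parity j : exists m, j = (2 * m)%nat \/ j = (2 * m + 1)%nat.
Proof. destruct (Nat.Even_or_Odd j) as [[m H]|[m H]]; exists m; auto. Qed.

(** * Expansions at 0 *)

Definition near0 (Q : R -> Prop) := exists d, 0 < d /\ forall z, Rabs z < d -> Q z.

Definition bigO (f : R -> R) (N : nat) :=
  exists C, near0 (fun z => Rabs (f z) <= C * Rabs z ^ N).

Definition poly (c : nat -> R) (N : nat) (z : R) := sum_f_R0 (fun k => c k * z ^ k) N.

Definition has_expansion (f : R -> R) (c : nat -> R) :=
  forall N, bigO (fun z => f z - poly c N z) (S N).

Definition trunc (c : nat -> R) (N : nat) (k : nat) : R := if Nat.leb k N then c k else 0.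

Lemma near0_and (P Q : R -> Prop) : near0 P -> near0 Q -> near0 (fun z => P z /\ Q z).
Proof.
  intros [d1 [H1 P1]] [d2 [H2 P2]]. exists (Rmin d1 d2); split.
  - apply Rmin_pos; auto.
  - intros z Hz; split; [apply P1 | apply P2]; eapply Rlt_le_trans; eauto;
      [apply Rmin_l | apply Rmin_r].
Qed.

Lemma near0_impl (P Q : R -> Prop) : near0 P -> (forall z, P z -> Q z) -> near0 Q.
Proof. intros [d [Hd H]] HPQ; exists d; split; auto. Qed.

Lemma near0_Rabs_lt d : 0 < d -> near0 (fun z => Rabs z < d).
Proof. intros Hd; exists d; split; auto. Qed.

Lemma near0_all (P : R -> Prop) : (forall z, P z) -> near0 P.
Proof. intros H; exists 1; split; [lra | auto]. Qed.

Lemma bigO_ext f g N : near0 (fun z => f z = g z) -> bigO f N -> bigO g N.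
Proof.
  intros He [C HC]; exists C. eapply near0_impl; [apply near0_and; [exact He | exact HC]|].
  simpl; intros z [E B]; rewrite <- E; auto.
Qed.

Lemma bigO_zero N : bigO (fun _ => 0) N.
Proof. exists 0. apply near0_all; intros; rewrite Rabs_R0; lra. Qed.

Lemma bigO_plus f g N : bigO f N -> bigO g N -> bigO (fun z => f z + g z) N.
Proof.
  intros [C1 H1] [C2 H2]; exists (C1 + C2).
  eapply near0_impl; [apply near0_and; [exact H1 | exact H2]|].
  simpl; intros z [A B]. eapply Rle_trans; [apply Rabs_triang|]. lra.
Qed.

Lemma bigO_minus f g N : bigO f N -> bigO g N -> bigO (fun z => f z - g z) N.
Proof.
  intros [C1 H1] [C2 H2]; exists (C1 + C2).
  eapply near0_impl; [apply near0_and; [exact H1 | exact H2]|].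
  simpl; intros z [A B]. eapply Rle_trans; [apply Rabs_triang|]. rewrite Rabs_Ropp. lra.
Qed.

Lemma bigO_nonneg_const f N :
  bigO f N -> exists C, 0 <= C /\ near0 (fun z => Rabs (f z) <= C * Rabs z ^ N).
Proof.
  intros [C H]; exists (Rabs C); split; [apply Rabs_pos|].
  eapply near0_impl; [exact H|]. simpl; intros z Hz. eapply Rle_trans; [exact Hz|].
  apply Rmult_le_compat_r; [apply pow_le, Rabs_pos | apply RRle_abs].
Qed.

Lemma bigO_mult_bounded f g N B : bigO f N -> near0 (fun z => Rabs (g z) <= B) ->
  bigO (fun z => g z * f z) N.
Proof.
  intros Hf Hg. destruct (bigO_nonneg_const f N Hf) as [C [HC H]].
  exists (Rabs B * C). eapply near0_impl; [apply near0_and; [exact H | exact Hg]|].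
  simpl; intros z [A Bz]. rewrite Rabs_mult, Rmult_assoc.
  apply Rmult_le_compat; try apply Rabs_pos; auto.
  eapply Rle_trans; [exact Bz | apply RRle_abs].
Qed.

Lemma bigO_scal f N c : bigO f N -> bigO (fun z => c * f z) N.
Proof.
  intros H; apply (bigO_mult_bounded f (fun _ => c) N (Rabs c)); auto.
  apply near0_all; intros; lra.
Qed.

Lemma bigO_weaken f N M : bigO f N -> (M <= N)%nat -> bigO f M.
Proof.
  intros Hf HMN. destruct (bigO_nonneg_const f N Hf) as [C [HC H]]. exists C.
  eapply near0_impl; [apply near0_and; [exact H | apply (near0_Rabs_lt 1); lra]|].
  simpl; intros z [A B]. eapply Rle_trans; [exact A|].
  apply Rmult_le_compat_l; auto. apply Rle_pow_le1; auto. split; [apply Rabs_pos | lra].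
Qed.

Lemma bigO_monomial c M N : (N <= M)%nat -> bigO (fun z => c * z ^ M) N.
Proof.
  intros H. exists (Rabs c). eapply near0_impl; [apply (near0_Rabs_lt 1); lra|].
  simpl; intros z Hz. rewrite Rabs_mult, <- RPow_abs.
  apply Rmult_le_compat_l; [apply Rabs_pos|]. apply Rle_pow_le1; auto.
  split; [apply Rabs_pos | lra].
Qed.

Lemma poly_ext c c' N z : (forall k, (k <= N)%nat -> c k = c' k) -> poly c N z = poly c' N z.
Proof. intros H; apply sum_eq; intros; rewrite H; auto. Qed.

Lemma poly_tail c N M : (N <= M)%nat -> bigO (fun z => poly c M z - poly c N z) (S N).
Proof.
  intros H; induction M.
  - assert (N = 0%nat) by lia; subst. eapply bigO_ext; [|apply bigO_zero].
    apply near0_all; intros; ring.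
  - destruct (Nat.eq_dec N (S M)) as [->|HN].
    + eapply bigO_ext; [|apply bigO_zero]. apply near0_all; intros; ring.
    + eapply bigO_ext;
        [|apply bigO_plus; [apply IHM; lia | apply (bigO_monomial (c (S M)) (S M)); lia]].
      apply near0_all; intros; unfold poly; simpl; ring.
Qed.

Lemma has_expansion_of_longer f c :
  (forall N, exists M, (N <= M)%nat /\ bigO (fun z => f z - poly c M z) (S N)) ->
  has_expansion f c.
Proof.
  intros H N. destruct (H N) as [M [HM B]].
  eapply bigO_ext; [|apply bigO_plus; [exact B | apply (poly_tail c N M HM)]].
  apply near0_all; intros; ring.
Qed.

Lemma has_expansion_ext f g c : near0 (fun z => f z = g z) ->
  has_expansion f c -> has_expansion g c.
Proof.
  intros He H N. eapply bigO_ext; [|apply (H N)]. eapply near0_impl; [exact He|].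
  simpl; intros z ->; reflexivity.
Qed.

Lemma has_expansion_ext_all f g c : (forall z, f z = g z) ->
  has_expansion f c -> has_expansion g c.
Proof. intros He; apply has_expansion_ext, near0_all, He. Qed.

Lemma has_expansion_ext_coef f c c' : (forall k, c k = c' k) ->
  has_expansion f c -> has_expansion f c'.
Proof.
  intros He H N. eapply bigO_ext; [|apply (H N)].
  apply near0_all; intros; rewrite (poly_ext c c'); auto.
Qed.

Lemma has_expansion_plus f g a b : has_expansion f a -> has_expansion g b ->
  has_expansion (fun z => f z + g z) (fun k => a k + b k).
Proof.
  intros Hf Hg N. eapply bigO_ext; [|apply bigO_plus; [apply (Hf N) | apply (Hg N)]].
  apply near0_all; intros z; unfold poly.
  rewrite (sum_eq (fun i => (a i + b i) * z ^ i) (fun i => a i * z ^ i + b i * z ^ i))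
    by (intros; ring).
  rewrite plus_sum. ring.
Qed.

Lemma has_expansion_scal f a c : has_expansion f a ->
  has_expansion (fun z => c * f z) (fun k => c * a k).
Proof.
  intros Hf N. eapply bigO_ext; [|apply (bigO_scal _ _ c (Hf N))].
  apply near0_all; intros z; unfold poly.
  rewrite (sum_eq (fun i => c * a i * z ^ i) (fun i => c * (a i * z ^ i))) by (intros; ring).
  rewrite sum_f_R0_scal_l. ring.
Qed.

Lemma has_expansion_minus f g a b : has_expansion f a -> has_expansion g b ->
  has_expansion (fun z => f z - g z) (fun k => a k - b k).
Proof.
  intros Hf Hg. apply (has_expansion_scal g b (-1)) in Hg.
  eapply has_expansion_ext_coef;
    [|eapply has_expansion_ext_all; [|apply (has_expansion_plus _ _ _ _ Hf Hg)]];
    simpl; intros; ring.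
Qed.

Lemma has_expansion_sum (f : nat -> R -> R) (c : nat -> nat -> R) N :
  (forall n, has_expansion (f n) (c n)) ->
  has_expansion (fun z => sum_f_R0 (fun n => f n z) N) (fun j => sum_f_R0 (fun n => c n j) N).
Proof. intros H; induction N; simpl; auto. apply has_expansion_plus; auto. Qed.

Lemma has_expansion_reflect f c : has_expansion f c ->
  has_expansion (fun z => f (- z)) (fun k => (-1) ^ k * c k).
Proof.
  intros Hf N. destruct (Hf N) as [C [d [Hd H]]]. exists C, d; split; auto.
  intros z Hz. rewrite <- (Rabs_Ropp z).
  replace (poly (fun k => (-1) ^ k * c k) N z) with (poly c N (- z)).
  - apply H. rewrite Rabs_Ropp; auto.
  - apply sum_eq; intros. replace (- z) with (-1 * z) by ring. rewrite Rpow_mult_distr. ring.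
Qed.

Lemma trunc_le c n i : (i <= n)%nat -> trunc c n i = c i.
Proof.
  intros H; unfold trunc.
  replace (Nat.leb i n) with true by (symmetry; apply Nat.leb_le; auto); auto.
Qed.

Lemma poly_trunc_le c N M z : (M <= N)%nat -> poly (trunc c N) M z = poly c M z.
Proof. intros H; apply poly_ext; intros k Hk; apply trunc_le; lia. Qed.

Lemma poly_trunc_ge c N M z : (N <= M)%nat -> poly (trunc c N) M z = poly c N z.
Proof.
  intros H; induction M.
  - assert (N = 0%nat) by lia; subst; apply poly_trunc_le; lia.
  - destruct (Nat.eq_dec N (S M)) as [->|HN]; [apply poly_trunc_le; lia|].
    unfold poly in *; simpl. rewrite IHM by lia. unfold trunc.
    replace (Nat.leb (S M) N) with false by (symmetry; apply Nat.leb_gt; lia). ring.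
Qed.

Lemma has_expansion_poly c N : has_expansion (poly c N) (trunc c N).
Proof.
  intros M. destruct (le_lt_dec N M).
  - eapply bigO_ext; [|apply bigO_zero]. apply near0_all; intros.
    rewrite poly_trunc_ge by auto; ring.
  - eapply bigO_ext; [|apply (poly_tail c M N); lia]. apply near0_all; intros.
    rewrite poly_trunc_le by lia; ring.
Qed.

Lemma has_expansion_bounded f c : has_expansion f c -> exists B, near0 (fun z => Rabs (f z) <= B).
Proof.
  intros H. destruct (bigO_nonneg_const _ _ (H 0%nat)) as [C [HC Hn]].
  exists (Rabs (c 0%nat) + C).
  eapply near0_impl; [apply near0_and; [exact Hn | apply (near0_Rabs_lt 1); lra]|].
  simpl; intros z [A B]. unfold poly in A; simpl in A.
  replace (f z) with ((f z - c 0%nat * 1) + c 0%nat) by ring.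
  eapply Rle_trans; [apply Rabs_triang|].
  assert (C * (Rabs z * 1) <= C) by (rewrite Rmult_1_r; rewrite <- (Rmult_1_r C) at 2;
    apply Rmult_le_compat_l; lra). lra.
Qed.

Lemma has_expansion_near f c eps : has_expansion f c -> 0 < eps ->
  near0 (fun z => Rabs (f z - c 0%nat) < eps).
Proof.
  intros H He. destruct (bigO_nonneg_const _ _ (H 0%nat)) as [C [HC Hn]].
  set (r := Rmin 1 (eps / (C + 1))).
  assert (Hr : 0 < r) by (apply Rmin_pos; [lra | apply Rdiv_lt_0_compat; lra]).
  eapply near0_impl; [apply near0_and; [exact Hn | apply (near0_Rabs_lt r Hr)]|].
  simpl; intros z [A B]. unfold poly in A; simpl in A. rewrite !Rmult_1_r in A.
  eapply Rle_lt_trans; [exact A|].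
  assert (Hz : Rabs z < eps / (C + 1)) by (eapply Rlt_le_trans; [exact B | apply Rmin_r]).
  apply (Rmult_lt_compat_l (C + 1)) in Hz; [|lra].
  replace ((C + 1) * (eps / (C + 1))) with eps in Hz by (field; lra).
  pose proof (Rabs_pos z). nra.
Qed.

Lemma bigO_diff_of_agree f g c c' N : has_expansion f c -> has_expansion g c' ->
  (forall k, (k <= N)%nat -> c k = c' k) -> bigO (fun z => f z - g z) (S N).
Proof.
  intros Hf Hg He. eapply bigO_ext; [|apply bigO_minus; [apply (Hf N) | apply (Hg N)]].
  apply near0_all; intros. rewrite (poly_ext c c' N) by auto. ring.
Qed.

Lemma has_expansion_unique f c c' : has_expansion f c -> has_expansion f c' ->
  forall k, c k = c' k.
Proof.
  intros Hc Hc'.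
  assert (forall n k, (k <= n)%nat -> c k = c' k); [|intros k; apply (H k); lia].
  induction n as [n IH] using lt_wf_ind. intros k Hk.
  assert (Hlow : forall i, (i < k)%nat -> c i = c' i) by (intros; apply (IH i); lia).
  assert (Hp : forall z, poly c' k z - poly c k z = (c' k - c k) * z ^ k).
  { intros z. destruct k; [unfold poly; simpl; ring|].
    unfold poly; simpl. rewrite (sum_eq (fun i => c' i * z ^ i) (fun i => c i * z ^ i)).
    - ring.
    - intros i Hi; rewrite Hlow by lia; auto. }
  assert (HB : bigO (fun z => (c' k - c k) * z ^ k) (S k)).
  { eapply bigO_ext; [|apply bigO_minus; [apply (Hc k) | apply (Hc' k)]].
    apply near0_all; intros z; simpl. rewrite <- Hp; ring. }
  destruct (bigO_nonneg_const _ _ HB) as [C [HC [d [Hd Hn]]]].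
  destruct (Req_dec (c k) (c' k)) as [E|E]; auto. exfalso.
  set (D := Rabs (c' k - c k)). assert (HD : 0 < D) by (apply Rabs_pos_lt; intro; apply E; lra).
  set (z := Rmin (d / 2) (D / (2 * (C + 1)))).
  assert (Hz : 0 < z) by (apply Rmin_pos; apply Rdiv_lt_0_compat; lra).
  assert (Hzd : Rabs z < d) by (rewrite Rabs_pos_eq by lra; eapply Rle_lt_trans; [apply Rmin_l | lra]).
  specialize (Hn z Hzd). rewrite Rabs_mult, <- RPow_abs in Hn.
  rewrite (Rabs_pos_eq z) in Hn by (left; exact Hz). fold D in Hn.
  assert (Hzk : 0 < z ^ k) by (apply pow_lt; exact Hz). simpl in Hn.
  assert (D <= C * z) by nra.
  assert (z <= D / (2 * (C + 1))) by apply Rmin_r.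
  assert (C * z <= C * (D / (2 * (C + 1)))) by (apply Rmult_le_compat_l; lra).
  assert (C * (D / (2 * (C + 1))) < D).
  { apply (Rmult_lt_reg_r (2 * (C + 1))); [lra|].
    replace (C * (D / (2 * (C + 1))) * (2 * (C + 1))) with (C * D) by (field; lra). nra. }
  lra.
Qed.

(** * Cauchy products *)

Definition conv (a b : nat -> R) (n : nat) : R :=
  sum_f_R0 (fun k => a k * b (n - k)%nat) n.

Lemma conv_ext_le a b a' b' n : (forall i, (i <= n)%nat -> a i = a' i) ->
  (forall i, (i <= n)%nat -> b i = b' i) -> conv a b n = conv a' b' n.
Proof. intros Ha Hb. apply sum_eq; intros i Hi. rewrite Ha, Hb by lia; auto. Qed.

Lemma poly_mult_conv (a b : nat -> R) (N : nat) : (0 < N)%nat ->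
  bigO (fun z => poly a N z * poly b N z - poly (conv a b) N z) (S N).
Proof.
  intros HN.
  set (K := sum_f_R0 (fun k => sum_f_R0 (fun l => Rabs (a (S (l + k)%nat)) * Rabs (b (N - l)%nat))
              (pred (N - k))) (pred N)).
  exists K. exists 1; split; [lra|]. intros z Hz.
  unfold poly. rewrite cauchy_finite by auto.
  replace (sum_f_R0 (fun k => sum_f_R0 (fun p => a p * z ^ p * (b (k - p)%nat * z ^ (k - p))) k) N)
    with (sum_f_R0 (fun k => conv a b k * z ^ k) N).
  2:{ apply sum_eq; intros k Hk. unfold conv. rewrite <- sum_f_R0_scal_r.
      apply sum_eq; intros p Hp.
      replace (z ^ k) with (z ^ p * z ^ (k - p)) by (rewrite <- pow_add; f_equal; lia). ring. }
  match goal with |- Rabs (?A + ?B - ?A) <= _ => replace (A + B - A) with B by ring end.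
  eapply Rle_trans; [apply Rsum_abs|].
  unfold K. rewrite <- sum_f_R0_scal_r. apply sum_Rle; intros k Hk.
  eapply Rle_trans; [apply Rsum_abs|].
  rewrite <- sum_f_R0_scal_r. apply sum_Rle; intros l Hl.
  rewrite !Rabs_mult, <- !RPow_abs.
  replace (Rabs (a (S (l + k)%nat)) * Rabs z ^ S (l + k)%nat * (Rabs (b (N - l)%nat) * Rabs z ^ (N - l)))
    with (Rabs (a (S (l + k)%nat)) * Rabs (b (N - l)%nat) * Rabs z ^ (S (l + k) + (N - l))%nat)
    by (rewrite pow_add; ring).
  apply Rmult_le_compat_l; [apply Rmult_le_pos; apply Rabs_pos|].
  apply Rle_pow_le1; [split; [apply Rabs_pos | lra] | lia].
Qed.

Lemma has_expansion_mult f g a b : has_expansion f a -> has_expansion g b ->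
  has_expansion (fun z => f z * g z) (conv a b).
Proof.
  intros Hf Hg. apply has_expansion_of_longer; intros N. exists (S N); split; [lia|].
  apply (bigO_weaken _ (S (S N))); [|lia].
  destruct (has_expansion_bounded _ _ (has_expansion_poly a (S N))) as [B1 HB1].
  destruct (has_expansion_bounded _ _ Hg) as [B2 HB2].
  (* with A, B the truncations of a, b at order S N:
     f g - conv a b = (f - A) g + A (g - B) + (A B - conv a b) *)
  eapply bigO_ext; [|apply bigO_plus; [apply bigO_plus; [apply (poly_mult_conv a b (S N)); lia |
     apply (bigO_mult_bounded _ (poly a (S N)) _ B1 (Hg (S N)) HB1)] |
     apply (bigO_mult_bounded _ g _ B2 (Hf (S N)) HB2)]].
  apply near0_all; intros; simpl; ring.
Qed.

(* Commutativity and associativity are read off from the uniqueness of the expansions of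
   products of polynomials. *)
Lemma conv_comm a b n : conv a b n = conv b a n.
Proof.
  assert (H1 := has_expansion_mult _ _ _ _ (has_expansion_poly a n) (has_expansion_poly b n)).
  assert (H2 := has_expansion_mult _ _ _ _ (has_expansion_poly b n) (has_expansion_poly a n)).
  eapply has_expansion_ext_all in H2; [|intros z; apply Rmult_comm].
  pose proof (has_expansion_unique _ _ _ H1 H2 n) as E.
  rewrite (conv_ext_le a b (trunc a n) (trunc b n)), (conv_ext_le b a (trunc b n) (trunc a n));
    auto; intros; rewrite trunc_le; auto.
Qed.

Lemma conv_assoc a b c n : conv (conv a b) c n = conv a (conv b c) n.
Proof.
  assert (H1 := has_expansion_mult _ _ _ _
    (has_expansion_mult _ _ _ _ (has_expansion_poly a n) (has_expansion_poly b n))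
    (has_expansion_poly c n)).
  assert (H2 := has_expansion_mult _ _ _ _ (has_expansion_poly a n)
    (has_expansion_mult _ _ _ _ (has_expansion_poly b n) (has_expansion_poly c n))).
  eapply has_expansion_ext_all in H2; [|intros z; symmetry; apply Rmult_assoc].
  pose proof (has_expansion_unique _ _ _ H1 H2 n) as E.
  rewrite (conv_ext_le (conv a b) c (conv (trunc a n) (trunc b n)) (trunc c n)).
  rewrite (conv_ext_le a (conv b c) (trunc a n) (conv (trunc b n) (trunc c n))); auto.
  all: intros; try (rewrite trunc_le; auto; fail).
  all: apply conv_ext_le; intros; rewrite trunc_le; auto; lia.
Qed.

Lemma conv_plus_r a b c n : conv a (fun k => b k + c k) n = conv a b n + conv a c n.
Proof. unfold conv. rewrite <- plus_sum. apply sum_eq; intros; ring. Qed.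

Lemma conv_scal_l a b c n : conv (fun k => c * a k) b n = c * conv a b n.
Proof. unfold conv. rewrite <- sum_f_R0_scal_l. apply sum_eq; intros; ring. Qed.

Lemma conv_scal_r a b c n : conv a (fun k => c * b k) n = c * conv a b n.
Proof. unfold conv. rewrite <- sum_f_R0_scal_l. apply sum_eq; intros; ring. Qed.

Definition unit_seq (n : nat) : R := match n with O => 1 | _ => 0 end.

Fixpoint conv_pow (b : nat -> R) (k : nat) : nat -> R :=
  match k with O => unit_seq | S k => conv b (conv_pow b k) end.

Definition deriv_seq (a : nat -> R) (n : nat) : R := INR n * a n.

Lemma deriv_seq_conv a b n :
  deriv_seq (conv a b) n = conv (deriv_seq a) b n + conv a (deriv_seq b) n.
Proof.
  unfold deriv_seq, conv. rewrite <- plus_sum, <- sum_f_R0_scal_l. apply sum_eq; intros i Hi.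
  rewrite minus_INR by auto. ring.
Qed.

Definition shift (k : nat) (a : nat -> R) (j : nat) : R :=
  if Nat.leb k j then a (j - k)%nat else 0.

Lemma shift_lt k a j : (j < k)%nat -> shift k a j = 0.
Proof.
  intros H; unfold shift.
  replace (Nat.leb k j) with false by (symmetry; apply Nat.leb_gt; auto). auto.
Qed.

Lemma shift_ge k a j : (k <= j)%nat -> shift k a j = a (j - k)%nat.
Proof.
  intros H; unfold shift.
  replace (Nat.leb k j) with true by (symmetry; apply Nat.leb_le; auto). auto.
Qed.

Lemma shift_0 a : shift 0 a = a.
Proof. extensionality j. rewrite shift_ge by lia. f_equal. lia. Qed.

Lemma shift_shift k m a : shift k (shift m a) = shift (k + m) a.
Proof.
  extensionality j. destruct (le_lt_dec (k + m) j).
  - rewrite !shift_ge by lia. f_equal; lia.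
  - rewrite (shift_lt (k + m)) by lia. destruct (le_lt_dec k j).
    + rewrite shift_ge, shift_lt by lia. auto.
    + rewrite shift_lt by lia. auto.
Qed.

Lemma conv_shift1_l a b : conv (shift 1 a) b = shift 1 (conv a b).
Proof.
  extensionality j. destruct j.
  - unfold conv, shift; simpl; ring.
  - unfold conv. rewrite decomp_sum by lia. simpl pred.
    rewrite (shift_lt 1 a 0), (shift_ge 1 _ (S j)) by lia.
    replace (S j - 1)%nat with j by lia. rewrite Rmult_0_l, Rplus_0_l.
    apply sum_eq; intros i Hi. rewrite shift_ge by lia. f_equal; f_equal; lia.
Qed.

Lemma conv_shift_l k a b : conv (shift k a) b = shift k (conv a b).
Proof.
  induction k.
  - rewrite !shift_0; auto.
  - change (S k) with (1 + k)%nat.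
    rewrite <- !shift_shift, conv_shift1_l, IHk. auto.
Qed.

Lemma conv_shift_r k a b : conv a (shift k b) = shift k (conv a b).
Proof.
  extensionality j. rewrite conv_comm, conv_shift_l. unfold shift.
  destruct (Nat.leb k j); auto. apply conv_comm.
Qed.

Lemma conv_pow_scal c b k : conv_pow (fun j => c * b j) k = fun j => c ^ k * conv_pow b k j.
Proof.
  induction k; extensionality j; simpl.
  - ring.
  - rewrite IHk, conv_scal_r, conv_scal_l. ring.
Qed.

Lemma conv_pow_shift1 b k : conv_pow (shift 1 b) k = shift k (conv_pow b k).
Proof.
  induction k; simpl.
  - rewrite shift_0; auto.
  - rewrite IHk, conv_shift_r, conv_shift1_l, shift_shift. f_equal. lia.
Qed.

Lemma conv_pow_low b : b O = 0 -> forall k X j, (j < k)%nat -> conv (conv_pow b k) X j = 0.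
Proof.
  intros H0 k X j Hj.
  assert (E : b = shift 1 (fun i => b (S i))).
  { extensionality i. destruct i; [rewrite shift_lt by lia; auto|].
    rewrite shift_ge by lia. f_equal. lia. }
  rewrite E, conv_pow_shift1, conv_shift_l, shift_lt by auto. reflexivity.
Qed.

Definition spread (a : nat -> R) (j : nat) : R :=
  if Nat.even j then a (Nat.div2 j) else 0.

Lemma spread_even a m : spread a (2 * m) = a m.
Proof.
  unfold spread. replace (Nat.even (2 * m)) with true
    by (symmetry; apply Nat.even_spec; exists m; auto).
  rewrite Nat.div2_double. auto.
Qed.

Lemma spread_odd a m : spread a (2 * m + 1) = 0.
Proof.
  unfold spread. replace (Nat.even (2 * m + 1)) with false; auto.
  symmetry; apply Bool.not_true_iff_false; rewrite Nat.even_spec.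
  intros [k Hk]; lia.
Qed.

Lemma conv_spread a b n : conv (spread a) (spread b) n = spread (conv a b) n.
Proof.
  destruct (parity n) as [m [->| ->]]; unfold conv.
  - rewrite sum_f_R0_double by (intros i; rewrite spread_odd; ring).
    rewrite spread_even. apply sum_eq; intros i Hi.
    replace (2 * m - 2 * i)%nat with (2 * (m - i))%nat by lia. rewrite !spread_even. auto.
  - rewrite sum_f_R0_double_S by (intros i; rewrite spread_odd; ring).
    rewrite spread_odd. apply sum_eq_R0; intros i Hi.
    replace (2 * m + 1 - 2 * i)%nat with (2 * (m - i) + 1)%nat by lia. rewrite spread_odd. ring.
Qed.

Lemma conv_pow_spread d k : conv_pow (spread d) k = spread (conv_pow d k).
Proof.
  induction k; extensionality n; simpl.
  - destruct (parity n) as [m [->| ->]].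
    + rewrite spread_even. destruct m; reflexivity.
    + rewrite spread_odd, Nat.add_1_r. reflexivity.
  - rewrite IHk. apply conv_spread.
Qed.

Lemma poly_spread a N z :
  poly (spread a) (2 * N + 1) z = sum_f_R0 (fun n => a n * z ^ (2 * n)) N.
Proof.
  unfold poly. rewrite sum_f_R0_double_S by (intros; rewrite spread_odd; ring).
  apply sum_eq; intros; rewrite spread_even; auto.
Qed.

(** * The coefficients [P] *)

Definition Pseq (r : R) (b : nat -> R) : nat -> R := fun k => P k r b.

(* J.C.P. Miller's recurrence: the coefficients q of (sum b_j z^j)^r satisfy
   sum_k (k (1 + r) - n) b_k q_{n-k} = 0, which determines them from q_0 = b_0^r. *)
Definition miller_recurrence (r : R) (b q : nat -> R) : Prop :=
  q O = Rpower (b O) r /\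
  forall n, sum_f_R0 (fun k => (INR k * (1 + r) - INR n) * b k * q (n - k)%nat) n = 0.

Lemma Ptab_length r b n : length (Ptab r b n) = S n.
Proof. induction n; simpl; auto. rewrite length_app; simpl; lia. Qed.

Lemma Ptab_nth r b n k : (k <= n)%nat -> nth k (Ptab r b n) 0 = P k r b.
Proof.
  intros H; induction n.
  - assert (k = 0%nat) by lia; subst; reflexivity.
  - destruct (Nat.eq_dec k (S n)) as [->|Hk]; [reflexivity|].
    simpl Ptab. rewrite app_nth1 by (rewrite Ptab_length; lia). apply IHn; lia.
Qed.

Lemma P_S r b n : P (S n) r b =
  / (INR (S n) * b O) * sum_f_R0 (fun j => (INR (S j) * (1 + r) - INR (S n)) * b (S j)
       * P (n - j)%nat r b) n.
Proof.
  unfold P at 1. simpl Ptab.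
  rewrite app_nth2 by (rewrite Ptab_length; lia). rewrite Ptab_length, Nat.sub_diag. simpl nth.
  f_equal. apply sum_eq; intros i Hi. f_equal.
  replace (S n - S i)%nat with (n - i)%nat by lia. apply Ptab_nth; lia.
Qed.

Lemma P_miller r b : b O <> 0 -> miller_recurrence r b (Pseq r b).
Proof.
  intros Hb; split; [reflexivity|]. intros n; destruct n.
  - simpl; ring.
  - rewrite decomp_sum by lia. simpl pred.
    unfold Pseq. rewrite Nat.sub_0_r, P_S.
    replace (INR 0) with 0 by reflexivity.
    match goal with |- _ + ?A = 0 => change A with
      (sum_f_R0 (fun j => (INR (S j) * (1 + r) - INR (S n)) * b (S j) * P (n - j) r b) n) end.
    assert (HS : INR (S n) <> 0) by (apply not_0_INR; lia).
    field. split; auto.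
Qed.

Lemma miller_unique r b q : b O <> 0 -> miller_recurrence r b q -> forall n, q n = P n r b.
Proof.
  intros Hb [H0 Hs].
  assert (forall n k, (k <= n)%nat -> q k = P k r b); [|intros n; apply (H n); lia].
  induction n; intros k Hk.
  - assert (k = 0%nat) by lia; subst; exact H0.
  - destruct (Nat.eq_dec k (S n)) as [->|]; [|apply IHn; lia].
    specialize (Hs (S n)). rewrite decomp_sum in Hs by lia. simpl pred in Hs.
    rewrite Nat.sub_0_r in Hs. replace (INR 0) with 0 in Hs by reflexivity.
    rewrite P_S.
    rewrite (sum_eq (fun j => (INR (S j) * (1 + r) - INR (S n)) * b (S j) * P (n - j)%nat r b)
      (fun i => (INR (S i) * (1 + r) - INR (S n)) * b (S i) * q (S n - S i)%nat)).
    2:{ intros i Hi. simpl (S n - S i)%nat. rewrite (IHn (n - i)%nat) by lia. reflexivity. }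
    assert (HS : INR (S n) <> 0) by (apply not_0_INR; lia).
    apply (Rmult_eq_reg_l (INR (S n) * b O)); [|apply Rmult_integral_contrapositive; auto].
    field_simplify; [lra | auto].
Qed.

Lemma miller_sum_conv r b q n :
  sum_f_R0 (fun k => (INR k * (1 + r) - INR n) * b k * q (n - k)%nat) n =
  r * conv (deriv_seq b) q n - conv b (deriv_seq q) n.
Proof.
  unfold conv, deriv_seq. rewrite <- sum_f_R0_scal_l, <- minus_sum. apply sum_eq; intros i Hi.
  rewrite minus_INR by auto. ring.
Qed.

(* Multiplying (sum b)^r by sum b preserves Miller's recurrence, through the Leibniz rule
   for deriv_seq. *)
Lemma P_add1 b r : 0 < b O -> forall n, P n (r + 1) b = conv (Pseq r b) b n.
Proof.
  intros Hb n. symmetry. apply (miller_unique (r + 1) b); [lra|]. split.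
  - unfold conv, Pseq; simpl. unfold P; simpl. rewrite Rpower_plus, Rpower_1; auto.
  - intros m. rewrite miller_sum_conv.
    set (p := Pseq r b).
    assert (HM : forall k, conv b (deriv_seq p) k = r * conv (deriv_seq b) p k).
    { intros k. pose proof (proj2 (P_miller r b ltac:(lra)) k) as H.
      rewrite miller_sum_conv in H. fold p in H. lra. }
    replace (deriv_seq (conv p b))
      with (fun k => conv (deriv_seq p) b k + conv p (deriv_seq b) k)
      by (extensionality k; symmetry; apply deriv_seq_conv).
    rewrite conv_plus_r, <- (conv_assoc b (deriv_seq p) b).
    replace (conv b (deriv_seq p)) with (fun k => r * conv (deriv_seq b) p k)
      by (extensionality k; auto).
    rewrite conv_scal_l, <- (conv_assoc b p (deriv_seq b)).
    replace (conv b p) with (conv p b) by (extensionality k; apply conv_comm).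
    rewrite (conv_comm (conv p b) (deriv_seq b)), <- (conv_assoc (deriv_seq b) p b). ring.
Qed.

Lemma P_exponent0 b : 0 < b O -> forall n, P n 0 b = unit_seq n.
Proof.
  intros Hb n. symmetry. apply (miller_unique 0 b unit_seq); [lra|]. split.
  - simpl. rewrite Rpower_O; auto.
  - intros m. apply sum_eq_R0; intros k Hk.
    destruct (Nat.eq_dec k m) as [->|Hne]; [ring|].
    destruct (m - k)%nat eqn:E; [lia|]. simpl; ring.
Qed.

Lemma conv_pow_P b : 0 < b O -> forall k n, conv_pow b k n = P n (INR k) b.
Proof.
  intros Hb k. induction k; intros n.
  - simpl. rewrite P_exponent0; auto.
  - simpl conv_pow. rewrite conv_comm, S_INR, P_add1 by auto.
    apply conv_ext_le; intros; auto.
Qed.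

Lemma P_scal c b r : 0 < c -> 0 < b O -> forall n,
  P n r (fun k => c * b k) = Rpower c r * P n r b.
Proof.
  intros Hc Hb n. symmetry.
  apply (miller_unique r (fun k => c * b k) (fun n => Rpower c r * P n r b)).
  { apply Rmult_integral_contrapositive; lra. }
  split.
  - unfold P; simpl. apply Rpower_mult_distr; auto.
  - intros m. pose proof (proj2 (P_miller r b ltac:(lra)) m) as H. unfold Pseq in H.
    rewrite (sum_eq _ (fun k => (c * Rpower c r) *
      ((INR k * (1 + r) - INR m) * b k * P (m - k)%nat r b))) by (intros; ring).
    rewrite sum_f_R0_scal_l, H. ring.
Qed.

Lemma P_spread b r : 0 < b O -> forall n, P n r (spread b) = spread (Pseq r b) n.
Proof.
  intros Hb n. symmetry. apply (miller_unique r (spread b) (spread (Pseq r b))).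
  { unfold spread; simpl; lra. }
  split; [reflexivity|].
  intros j. destruct (parity j) as [m [->| ->]].
  - rewrite sum_f_R0_double by (intros i; rewrite spread_odd; ring).
    rewrite (sum_eq _ (fun i => 2 * ((INR i * (1 + r) - INR m) * b i * Pseq r b (m - i)%nat))).
    + rewrite sum_f_R0_scal_l, (proj2 (P_miller r b ltac:(lra)) m). ring.
    + intros i Hi. rewrite !spread_even.
      replace (2 * m - 2 * i)%nat with (2 * (m - i))%nat by lia.
      rewrite spread_even, !mult_INR. simpl (INR 2). ring.
  - rewrite sum_f_R0_double_S by (intros i; rewrite spread_odd; ring).
    apply sum_eq_R0; intros i Hi.
    replace (2 * m + 1 - 2 * i)%nat with (2 * (m - i) + 1)%nat by lia. rewrite spread_odd. ring.
Qed.

Lemma has_expansion_one : has_expansion (fun _ => 1) unit_seq.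
Proof.
  intros N. eapply bigO_ext; [|apply bigO_zero]. apply near0_all; intros z.
  assert (poly unit_seq N z = 1).
  { induction N; unfold poly in *; simpl; [ring|]. rewrite IHN; ring. }
  rewrite H; ring.
Qed.

Lemma has_expansion_pow f b : has_expansion f b ->
  forall k, has_expansion (fun z => f z ^ k) (conv_pow b k).
Proof.
  intros Hf k; induction k.
  - eapply has_expansion_ext_all; [|apply has_expansion_one]. intros; simpl; auto.
  - eapply has_expansion_ext_all; [|apply (has_expansion_mult _ _ _ _ Hf IHk)].
    intros; simpl; auto.
Qed.

Lemma has_expansion_div f g d e m : has_expansion (fun z => f z * g z) (conv d e) ->
  has_expansion g e -> 0 < m -> near0 (fun z => m <= Rabs (g z)) -> has_expansion f d.
Proof.
  intros H1 Hg Hm Hb N.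
  assert (A := bigO_diff_of_agree _ _ _ _ N H1
    (has_expansion_mult _ _ _ _ (has_expansion_poly d N) Hg)).
  destruct (bigO_nonneg_const _ _
    (A ltac:(intros k Hk; apply conv_ext_le; intros; auto; rewrite trunc_le; auto; lia)))
    as [C [HC HB]].
  exists (C / m). eapply near0_impl; [apply near0_and; [exact HB | exact Hb]|].
  cbv beta; intros z [B1 B2].
  replace (f z * g z - poly d N z * g z) with ((f z - poly d N z) * g z) in B1 by ring.
  rewrite Rabs_mult in B1.
  assert (0 <= Rabs z ^ S N) by (apply pow_le, Rabs_pos).
  apply (Rmult_le_reg_r m); auto.
  replace (C / m * Rabs z ^ S N * m) with (C * Rabs z ^ S N) by (field; lra).
  eapply Rle_trans; [apply Rmult_le_compat_l; [apply Rabs_pos | exact B2] | exact B1].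
Qed.

Lemma has_expansion_powerRZ f b : 0 < b O -> has_expansion f b ->
  forall r, has_expansion (fun z => powerRZ (f z) r) (Pseq (IZR r) b).
Proof.
  intros Hb Hf.
  assert (Hpos : near0 (fun z => b O / 2 <= f z)).
  { eapply near0_impl; [apply (has_expansion_near f b (b O / 2)); auto; lra|].
    simpl; intros z Hz. apply Rabs_def2 in Hz. lra. }
  assert (Hnat : forall k, has_expansion (fun z => powerRZ (f z) (Z.of_nat k)) (Pseq (INR k) b)).
  { intros k. eapply has_expansion_ext_coef;
      [|eapply has_expansion_ext_all; [|apply (has_expansion_pow f b Hf k)]].
    - intros n; unfold Pseq; apply conv_pow_P; auto.
    - intros; apply pow_powerRZ. }
  assert (Hneg : forall k, has_expansion (fun z => powerRZ (f z) (- Z.of_nat k)) (Pseq (- INR k) b)).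
  { induction k.
    - eapply has_expansion_ext_coef; [|eapply has_expansion_ext_all; [|apply has_expansion_one]].
      + intros n; unfold Pseq. replace (- INR 0) with 0 by (simpl; ring).
        rewrite P_exponent0; auto.
      + intros; simpl; auto.
    - (* f^(-k-1) is f^(-k) divided by f, which stays away from 0 *)
      apply (has_expansion_div _ f _ b (b O / 2)); auto; [|lra|].
      + eapply has_expansion_ext_coef; [|eapply has_expansion_ext; [|exact IHk]].
        * intros n. rewrite <- P_add1 by auto. unfold Pseq. f_equal. rewrite S_INR; ring.
        * eapply near0_impl; [exact Hpos|]. simpl; intros z Hz.
          replace (- Z.of_nat k)%Z with (- Z.of_nat (S k) + 1)%Z by lia.
          rewrite powerRZ_add by lra. simpl. ring.
      + eapply near0_impl; [exact Hpos|]. simpl; intros z Hz. rewrite Rabs_pos_eq; lra. }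
  intros r. destruct (Z_le_gt_dec 0 r).
  - rewrite <- (Z2Nat.id r), <- INR_IZR_INZ by auto. apply Hnat.
  - replace r with (- Z.of_nat (Z.to_nat (- r)))%Z by (rewrite Z2Nat.id; lia).
    rewrite opp_IZR, <- INR_IZR_INZ. apply Hneg.
Qed.

(** * Homogeneous means *)

Lemma mean_diag Q x : is_mean Q -> 0 < x -> Q x x = x.
Proof.
  intros Hm Hx. destruct (Hm x x Hx Hx) as [_ [H1 H2]].
  rewrite Rmin_left in H1 by lra. rewrite Rmax_left in H2 by lra. lra.
Qed.

Lemma powerRZ_1_minus_double x n : x <> 0 -> powerRZ x (1 - 2 * Z.of_nat n) = x * / x ^ (2 * n).
Proof.
  intros Hx. replace (1 - 2 * Z.of_nat n)%Z with (1 + - Z.of_nat (2 * n))%Z by lia.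
  rewrite powerRZ_add, powerRZ_neg', <- pow_powerRZ by auto. simpl; ring.
Qed.

Lemma Rabs_powerRZ_1_minus_double x n : 0 < x ->
  Rabs (powerRZ x (1 - 2 * Z.of_nat n)) = x * / x ^ (2 * n).
Proof.
  intros Hx. rewrite powerRZ_1_minus_double by lra. apply Rabs_pos_eq.
  apply Rmult_le_pos; [lra | left; apply Rinv_0_lt_compat, pow_lt; lra].
Qed.

Lemma Rabs_div_lt_1 t x : 0 < x -> Rabs t < x -> -1 < t / x < 1.
Proof.
  intros Hx Ht. apply Rabs_def2 in Ht.
  split; [apply (Rmult_lt_reg_r x) | apply (Rmult_lt_reg_r x)]; auto;
    unfold Rdiv; rewrite Rmult_assoc, Rinv_l; lra.
Qed.

Lemma sym_sum_rescale (a : nat -> R) t x N : 0 < x ->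
  sum_f_R0 (fun n => a n * t ^ (2 * n) * powerRZ x (1 - 2 * Z.of_nat n)) N =
  x * sum_f_R0 (fun n => a n * (t / x) ^ (2 * n)) N.
Proof.
  intros Hx. rewrite <- sum_f_R0_scal_l. apply sum_eq; intros n _.
  rewrite powerRZ_1_minus_double by lra. unfold Rdiv. rewrite Rpow_mult_distr, pow_inv.
  field. apply pow_nonzero; lra.
Qed.

Lemma homogeneous_sym_error F a N t x : is_homogeneous F -> 0 < x -> Rabs t < x ->
  F (x - t) (x + t) - sum_f_R0 (fun n => a n * t ^ (2 * n) * powerRZ x (1 - 2 * Z.of_nat n)) N
  = x * (F (1 - t / x) (1 + t / x) - sum_f_R0 (fun n => a n * (t / x) ^ (2 * n)) N).
Proof.
  intros Hh Hx Ht. pose proof (Rabs_div_lt_1 t x Hx Ht).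
  rewrite sym_sum_rescale, Rmult_minus_distr_l, <- (Hh x) by lra.
  replace (x * (1 - t / x)) with (x - t) by (field; lra).
  replace (x * (1 + t / x)) with (x + t) by (field; lra). ring.
Qed.

Lemma sym_asymp_coef0 Q a : is_mean Q -> has_sym_asymp Q a -> a O = 1.
Proof.
  intros Hm Ha. destruct (Req_dec (a O) 1) as [E|E]; auto. exfalso.
  set (e := Rabs (1 - a O) / 2).
  assert (He : 0 < e) by (apply Rdiv_lt_0_compat; [apply Rabs_pos_lt; lra | lra]).
  destruct (Ha 0 0%nat e He) as [X HX].
  set (x := Rmax X 1 + 1).
  assert (Hx1 : 1 < x) by (unfold x; pose proof (Rmax_r X 1); lra).
  assert (HxX : X < x) by (unfold x; pose proof (Rmax_l X 1); lra).
  specialize (HX x HxX). rewrite Rminus_0_r, Rplus_0_r, (mean_diag Q x Hm) in HX by lra.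
  simpl in HX.
  replace (x - a O * 1 * (x * 1)) with (x * (1 - a O)) in HX by ring.
  rewrite Rmult_1_r, Rabs_mult, Rabs_pos_eq in HX by lra.
  unfold e in HX. pose proof (Rabs_pos_lt (1 - a O) ltac:(lra)). nra.
Qed.

(* For w <> 0 take x = 1 / |w| and t = x w = +-1: the symmetric expansion at t = +-1 and
   large x is exactly the expansion of Q(1 - w, 1 + w) at small w. *)
Lemma has_expansion_of_sym_asymp Q a : is_mean Q -> is_homogeneous Q -> has_sym_asymp Q a ->
  has_expansion (fun w => Q (1 - w) (1 + w)) (spread a).
Proof.
  intros Hm Hh Ha. assert (Ha0 := sym_asymp_coef0 Q a Hm Ha).
  apply has_expansion_of_longer; intros N. exists (2 * S N + 1)%nat; split; [lia|].
  apply (bigO_weaken _ (2 * S N)); [|lia].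
  destruct (Ha 1 (S N) 1 Rlt_0_1) as [X1 H1].
  destruct (Ha (-1) (S N) 1 Rlt_0_1) as [X2 H2].
  set (X := Rabs X1 + Rabs X2 + 1).
  assert (HX : 1 <= X /\ X1 < X /\ X2 < X).
  { pose proof (Rle_abs X1); pose proof (Rle_abs X2);
      pose proof (Rabs_pos X1); pose proof (Rabs_pos X2); unfold X; lra. }
  destruct HX as [HX [HX1 HX2]].
  exists 1, (/ X). split; [apply Rinv_0_lt_compat; lra|].
  intros w Hw. rewrite poly_spread.
  destruct (Req_dec w 0) as [->|Hw0].
  - rewrite Rminus_0_r, Rplus_0_r, (mean_diag Q 1 Hm) by lra.
    assert (E : sum_f_R0 (fun n => a n * 0 ^ (2 * n)) (S N) = 1).
    { clear -Ha0. induction N; simpl in *; [rewrite Ha0 | rewrite IHN]; ring. }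
    rewrite E, Rminus_diag, Rabs_R0, pow_i by lia. lra.
  - assert (Hwp : 0 < Rabs w) by (apply Rabs_pos_lt; auto).
    set (x := / Rabs w).
    assert (HxX : X < x).
    { unfold x. apply (Rmult_lt_reg_l (Rabs w)); auto. rewrite Rinv_r by lra.
      apply (Rmult_lt_compat_r X) in Hw; [|lra]. rewrite Rinv_l in Hw; lra. }
    set (t := w * x).
    assert (Ht : t = 1 \/ t = -1).
    { unfold t, x. destruct (Rle_or_lt 0 w).
      - left. rewrite Rabs_pos_eq by lra. field; auto.
      - right. rewrite Rabs_left by lra. field; lra. }
    assert (Htx : Rabs t < x).
    { destruct Ht as [E|E]; rewrite E; unfold Rabs; destruct (Rcase_abs _); lra. }
    assert (Hg : Rabs (Q (x - t) (x + t) - sum_f_R0 (fun n => a n * t ^ (2 * n) *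
        powerRZ x (1 - 2 * Z.of_nat n)) (S N)) <= 1 * Rabs (powerRZ x (1 - 2 * Z.of_nat (S N))))
      by (destruct Ht as [E|E]; rewrite E; [apply H1 | apply H2]; lra).
    rewrite (homogeneous_sym_error Q a (S N) t x Hh), Rabs_mult, Rabs_pos_eq,
      Rabs_powerRZ_1_minus_double in Hg by lra.
    replace (t / x) with w in Hg by (unfold t; field; lra).
    apply (Rmult_le_reg_l x); [lra|].
    replace (Rabs w) with (/ x) by (unfold x; rewrite Rinv_inv; auto).
    rewrite pow_inv. lra.
Qed.

Lemma has_sym_asymp_of_expansion F a : is_homogeneous F ->
  has_expansion (fun w => F (1 - w) (1 + w)) (spread a) -> has_sym_asymp F a.
Proof.
  intros Hh Hr t N eps He.
  destruct (bigO_nonneg_const _ _ (Hr (2 * N + 1)%nat)) as [C [HC [d [Hd Hb]]]].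
  set (K := C * Rabs t ^ (2 * N + 2)).
  assert (HK : 0 <= K) by (apply Rmult_le_pos; auto; apply pow_le, Rabs_pos).
  pose proof (Rabs_pos t).
  exists ((Rabs t + 1) / d + Rabs t + 1 + K / eps). intros x Hx.
  assert (H1 : 0 <= (Rabs t + 1) / d) by (apply Rmult_le_pos; [lra | left; apply Rinv_0_lt_compat; lra]).
  assert (H2 : 0 <= K / eps) by (apply Rmult_le_pos; [lra | left; apply Rinv_0_lt_compat; lra]).
  assert (Hx1 : 1 < x) by lra. assert (Htx : Rabs t < x) by lra.
  assert (Hxd : Rabs t < d * x).
  { assert (H3 : (Rabs t + 1) / d < x) by lra. apply (Rmult_lt_compat_l d) in H3; auto.
    replace (d * ((Rabs t + 1) / d)) with (Rabs t + 1) in H3 by (field; lra). lra. }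
  assert (HKx : K <= eps * (x * x)).
  { assert (H3 : K / eps < x) by lra. apply (Rmult_lt_compat_l eps) in H3; auto.
    replace (eps * (K / eps)) with K in H3 by (field; lra). nra. }
  assert (Hw : Rabs (t / x) = Rabs t * / x).
  { unfold Rdiv. rewrite Rabs_mult, Rabs_inv, (Rabs_pos_eq x) by lra. auto. }
  assert (Hwd : Rabs (t / x) < d).
  { rewrite Hw. apply (Rmult_lt_reg_r x); [lra|]. rewrite Rmult_assoc, Rinv_l by lra. lra. }
  specialize (Hb (t / x) Hwd). cbv beta in Hb.
  rewrite poly_spread, Hw, Rpow_mult_distr, pow_inv in Hb.
  rewrite (homogeneous_sym_error F a N t x Hh), Rabs_mult, Rabs_pos_eq,
    Rabs_powerRZ_1_minus_double by lra.
  replace (S (2 * N + 1)) with (2 * N + 2)%nat in Hb by lia.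
  assert (Hx2N : 0 < / x ^ (2 * N)) by (apply Rinv_0_lt_compat, pow_lt; lra).
  replace (C * (Rabs t ^ (2 * N + 2) * / x ^ (2 * N + 2)))
    with (K * / x * / x * / x ^ (2 * N)) in Hb
    by (unfold K; rewrite !pow_add; simpl; field; split; try apply pow_nonzero; lra).
  assert (HKx2 : K * / x * / x <= eps).
  { apply (Rmult_le_reg_r (x * x)); [nra|].
    replace (K * / x * / x * (x * x)) with K by (field; lra). lra. }
  apply (Rmult_le_compat_l x) in Hb; [|lra].
  eapply Rle_trans; [exact Hb|].
  replace (x * (K * / x * / x * / x ^ (2 * N))) with (K * / x * / x * (x * / x ^ (2 * N)))
    by ring.
  apply Rmult_le_compat_r; [|exact HKx2]. apply Rmult_le_pos; lra.
Qed.

(* Coefficients of Q(U - V, U + V) = sum_n a_n V^(2n) U^(1-2n) + ..., for U, V with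
   coefficients al, be; as be_0 = 0, only n <= j contributes to the coefficient of z^j. *)
Definition mean_comp_coef (a al be : nat -> R) (j : nat) : R :=
  sum_f_R0 (fun n => a n * conv (conv_pow be (2 * n)) (Pseq (IZR (1 - 2 * Z.of_nat n)) al) j) j.

Lemma mean_comp_coef_trunc a al be N j : be O = 0 -> (j <= 2 * N + 1)%nat ->
  mean_comp_coef a al be j =
  sum_f_R0 (fun n => a n * conv (conv_pow be (2 * n)) (Pseq (IZR (1 - 2 * Z.of_nat n)) al) j) N.
Proof.
  intros H0 Hj. unfold mean_comp_coef. destruct (parity j) as [m Hm].
  assert (Hz : forall n, (m < n)%nat ->
    a n * conv (conv_pow be (2 * n)) (Pseq (IZR (1 - 2 * Z.of_nat n)) al) j = 0).
  { intros n Hn. rewrite conv_pow_low by (auto; lia). ring. }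
  rewrite (sum_f_R0_vanish_above _ m j), (sum_f_R0_vanish_above _ m N); auto; lia.
Qed.

Lemma near0_scaled_Rabs_lt L e : 0 <= L -> 0 < e -> near0 (fun z => L * Rabs z < e).
Proof.
  intros HL He. exists (e / (L + 1)). split; [apply Rdiv_lt_0_compat; lra|].
  intros z Hz. apply (Rmult_lt_compat_l (L + 1)) in Hz; [|lra].
  replace ((L + 1) * (e / (L + 1))) with e in Hz by (field; lra).
  pose proof (Rabs_pos z). nra.
Qed.

Lemma has_expansion_ratio_small U V al be : has_expansion U al -> has_expansion V be ->
  0 < al O -> be O = 0 ->
  exists L, 0 <= L /\ near0 (fun z => al O / 2 < U z /\ Rabs (V z / U z) <= L * Rabs z).
Proof.
  intros HU HV Hal Hbe.
  destruct (bigO_nonneg_const _ _ (HV 0%nat)) as [CV [HCV HVb]].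
  exists (2 * CV / al O). split; [apply Rmult_le_pos; [lra | left; apply Rinv_0_lt_compat; lra]|].
  eapply near0_impl; [apply near0_and; [exact HVb | apply (has_expansion_near U al (al O / 2)); auto; lra]|].
  cbv beta; intros z [B1 B2].
  unfold poly in B1; simpl in B1. rewrite Hbe, Rmult_0_l, Rminus_0_r, Rmult_1_r in B1.
  apply Rabs_def2 in B2. split; [lra|].
  unfold Rdiv. rewrite Rabs_mult, Rabs_inv, (Rabs_pos_eq (U z)) by lra.
  apply (Rmult_le_reg_r (U z)); [lra|]. rewrite Rmult_assoc, Rinv_l by lra.
  assert (H : 2 * CV / al O * Rabs z * (al O / 2) <= 2 * CV / al O * Rabs z * U z).
  { apply Rmult_le_compat_l; [|lra].
    apply Rmult_le_pos; [apply Rmult_le_pos; [lra | left; apply Rinv_0_lt_compat; lra] | apply Rabs_pos]. }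
  replace (2 * CV / al O * Rabs z * (al O / 2)) with (CV * Rabs z) in H by (field; lra). lra.
Qed.

(* With w = V / U, homogeneity gives Q(U - V, U + V) - sum_n a_n V^(2n) U^(1-2n)
   = U (Q(1 - w, 1 + w) - sum_n a_n w^(2n)), and w = O(z). *)
Lemma mean_comp_error Q a U V al be N :
  is_mean Q -> is_homogeneous Q -> has_sym_asymp Q a ->
  has_expansion U al -> has_expansion V be -> 0 < al O -> be O = 0 ->
  bigO (fun z => Q (U z - V z) (U z + V z) - sum_f_R0 (fun n =>
    a n * V z ^ (2 * n) * powerRZ (U z) (1 - 2 * Z.of_nat n)) N) (2 * N + 2).
Proof.
  intros Hm Hh Ha HU HV Hal Hbe.
  destruct (bigO_nonneg_const _ _ (has_expansion_of_sym_asymp Q a Hm Hh Ha (2 * N + 1)%nat))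
    as [Ck [HCk [dk [Hdk Hkb]]]].
  destruct (has_expansion_bounded _ _ HU) as [BU HBU].
  destruct (has_expansion_ratio_small U V al be HU HV Hal Hbe) as [L [HL Hw]].
  assert (Hsmall := near0_scaled_Rabs_lt L (Rmin 1 dk) HL ltac:(apply Rmin_pos; lra)).
  exists (Rabs BU * Ck * L ^ (2 * N + 2)).
  eapply near0_impl; [apply near0_and; [exact HBU | apply near0_and; [exact Hw | exact Hsmall]]|].
  cbv beta. intros z [B1 [[B2 B3] B4]].
  set (w := V z / U z) in B3.
  assert (Hw1 : Rabs w < 1) by (pose proof (Rmin_l 1 dk); lra).
  assert (Hwk : Rabs w < dk) by (pose proof (Rmin_r 1 dk); lra).
  assert (HVU : Rabs (V z) < U z).
  { replace (V z) with (w * U z) by (unfold w; field; lra).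
    rewrite Rabs_mult, (Rabs_pos_eq (U z)) by lra. nra. }
  rewrite (homogeneous_sym_error Q a N (V z) (U z) Hh), Rabs_mult by lra. fold w.
  specialize (Hkb w Hwk). cbv beta in Hkb. rewrite poly_spread in Hkb.
  replace (S (2 * N + 1)) with (2 * N + 2)%nat in Hkb by lia.
  replace (Rabs BU * Ck * L ^ (2 * N + 2) * Rabs z ^ (2 * N + 2))
    with (Rabs BU * (Ck * (L * Rabs z) ^ (2 * N + 2))) by (rewrite Rpow_mult_distr; ring).
  apply Rmult_le_compat; try apply Rabs_pos.
  - eapply Rle_trans; [exact B1 | apply RRle_abs].
  - eapply Rle_trans; [exact Hkb|]. apply Rmult_le_compat_l; auto.
    apply pow_incr. split; [apply Rabs_pos | lra].
Qed.

Lemma has_expansion_mean_comp Q a U V al be :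
  is_mean Q -> is_homogeneous Q -> has_sym_asymp Q a ->
  has_expansion U al -> has_expansion V be -> 0 < al O -> be O = 0 ->
  has_expansion (fun z => Q (U z - V z) (U z + V z)) (mean_comp_coef a al be).
Proof.
  intros Hm Hh Ha HU HV Hal Hbe.
  apply has_expansion_of_longer; intros N. exists (2 * N + 1)%nat; split; [lia|].
  set (c := fun j => sum_f_R0 (fun n =>
    a n * conv (conv_pow be (2 * n)) (Pseq (IZR (1 - 2 * Z.of_nat n)) al) j) N).
  assert (HT : has_expansion (fun z => sum_f_R0 (fun n =>
    a n * V z ^ (2 * n) * powerRZ (U z) (1 - 2 * Z.of_nat n)) N) c).
  { apply (has_expansion_sum (fun n z => a n * V z ^ (2 * n) * powerRZ (U z) (1 - 2 * Z.of_nat n))).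
    intros n. eapply has_expansion_ext_all; [|apply has_expansion_scal, has_expansion_mult;
      [apply has_expansion_pow, HV | apply has_expansion_powerRZ, HU; exact Hal]].
    intros z; simpl; ring. }
  eapply bigO_ext; [|apply bigO_plus;
    [apply (bigO_weaken _ _ _ (mean_comp_error Q a U V al be N Hm Hh Ha HU HV Hal Hbe)); lia |
     apply (bigO_weaken _ _ _ (HT (2 * N + 1)%nat)); lia]].
  apply near0_all; intros z.
  rewrite (poly_ext (mean_comp_coef a al be) c) by (intros; apply mean_comp_coef_trunc; auto).
  ring.
Qed.

(** * The resultant mean-map *)

Lemma Rpower_1_l r : Rpower 1 r = 1.
Proof. unfold Rpower. rewrite ln_1, Rmult_0_r, exp_0. auto. Qed.

Lemma INR_double n : INR (2 * n) = 2 * INR n.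
Proof. rewrite mult_INR. simpl. ring. Qed.

Lemma IZR_1_minus_double n : IZR (1 - 2 * Z.of_nat n) = -2 * INR n + 1.
Proof. rewrite minus_IZR, mult_IZR, <- INR_IZR_INZ. simpl. ring. Qed.

Lemma conv_pow_Pseq_double b n : 0 < b O -> conv_pow b (2 * n) = Pseq (2 * INR n) b.
Proof. intros Hb. extensionality k. unfold Pseq. rewrite conv_pow_P, INR_double; auto. Qed.

Definition one_minus_coef (k : nat) : R := match k with O => 1 | 1%nat => -1 | _ => 0 end.

Lemma has_expansion_one_minus : has_expansion (fun z => 1 - z) one_minus_coef.
Proof.
  eapply has_expansion_ext_coef; [|eapply has_expansion_ext_all;
    [|apply (has_expansion_poly one_minus_coef 1)]].
  - intros [|[|k]]; reflexivity.
  - intros z; unfold poly; simpl; ring.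
Qed.

(* h^M and (0, g^M) are the coefficient sequences of the sum and the difference of
   M(1 - z, 1 + z) and 1 - z. *)
Lemma hseq_spread aM k : aM O = 1 -> hseq aM k = one_minus_coef k + spread aM k.
Proof.
  intros H. destruct k as [|[|k]]; unfold spread; simpl; [rewrite H | |]; ring.
Qed.

Lemma shift_gseq_spread aM k : aM O = 1 -> shift 1 (gseq aM) k = spread aM k - one_minus_coef k.
Proof.
  intros H. destruct k as [|[|k]].
  - unfold spread, shift; simpl. rewrite H; ring.
  - unfold spread, shift; simpl. ring.
  - rewrite shift_ge by lia. replace (S (S k) - 1)%nat with (S k) by lia.
    unfold spread, one_minus_coef, gseq. rewrite Nat.odd_succ. simpl Nat.even. ring.
Qed.

Definition inner_coef (aM aN : nat -> R) : nat -> R :=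
  mean_comp_coef aN (fun k => / 2 * hseq aM k) (fun k => / 2 * shift 1 (gseq aM) k).

Lemma inner_coef_eq aM aN j : inner_coef aM aN j =
  sum_f_R0 (fun n => aN n * (/ 2 * shift (2 * n)
     (conv (Pseq (2 * INR n) (gseq aM)) (Pseq (-2 * INR n + 1) (hseq aM))) j)) j.
Proof.
  unfold inner_coef, mean_comp_coef. apply sum_eq; intros n _. f_equal.
  rewrite conv_pow_scal, conv_pow_shift1, conv_pow_Pseq_double by (simpl; lra).
  replace (Pseq (IZR (1 - 2 * Z.of_nat n)) (fun k => / 2 * hseq aM k))
    with (fun k => Rpower (/ 2) (-2 * INR n + 1) * Pseq (-2 * INR n + 1) (hseq aM) k).
  2:{ extensionality k. unfold Pseq. rewrite IZR_1_minus_double, P_scal; simpl; lra. }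
  rewrite conv_scal_l, conv_scal_r, conv_shift_l.
  replace ((/ 2) ^ (2 * n)) with (Rpower (/ 2) (2 * INR n))
    by (rewrite <- INR_double, Rpower_pow; auto; lra).
  rewrite <- Rmult_assoc, <- Rpower_plus.
  replace (2 * INR n + (-2 * INR n + 1)) with 1 by ring. rewrite Rpower_1 by lra. auto.
Qed.

Lemma inner_coef_even aM aN m : inner_coef aM aN (2 * m) = sseq aM aN m.
Proof.
  rewrite inner_coef_eq. unfold sseq.
  rewrite (sum_f_R0_vanish_above _ m (2 * m)); [| intros n Hn; rewrite shift_lt by lia; ring | lia].
  rewrite <- sum_f_R0_scal_l. apply sum_eq; intros n Hn.
  rewrite shift_ge by lia. unfold conv, Pseq. ring.
Qed.

Lemma inner_coef_odd aM aN m : inner_coef aM aN (2 * m + 1) = - dseq aM aN m.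
Proof.
  rewrite inner_coef_eq. unfold dseq. rewrite Ropp_mult_distr_l, Ropp_involutive.
  rewrite (sum_f_R0_vanish_above _ m (2 * m + 1)); [| intros n Hn; rewrite shift_lt by lia; ring | lia].
  rewrite <- sum_f_R0_scal_l. apply sum_eq; intros n Hn.
  rewrite shift_ge by lia. unfold conv, Pseq. ring.
Qed.

Lemma sseq_0 aM aN : aN O = 1 -> sseq aM aN 0 = 1.
Proof.
  intros H. unfold sseq, P. simpl. rewrite H.
  replace (-2 * 0 + 1) with 1 by ring. rewrite Rpower_1_l, Rpower_1 by lra. field.
Qed.

Lemma dseq_0 aM aN : aN O = 1 -> dseq aM aN 0 = / 2.
Proof.
  intros H. unfold dseq. simpl sum_f_R0. rewrite H, !P_S. unfold P. simpl.
  replace (-2 * 0 + 1) with 1 by ring. rewrite Rpower_1_l, Rpower_1 by lra. field.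
Qed.

Section InnerMeans.

Variables (M N : R -> R -> R) (aM aN : nat -> R).
Hypotheses (HmM : is_mean M) (HsM : is_symmetric M) (HhM : is_homogeneous M)
  (HaM : has_sym_asymp M aM) (HmN : is_mean N) (HsN : is_symmetric N)
  (HhN : is_homogeneous N) (HaN : has_sym_asymp N aN).

Lemma has_expansion_inner_left : has_expansion (fun z => N (1 - z) (M (1 - z) (1 + z))) (inner_coef aM aN).
Proof.
  assert (aM0 := sym_asymp_coef0 M aM HmM HaM).
  assert (Hmu := has_expansion_of_sym_asymp M aM HmM HhM HaM).
  assert (HU := has_expansion_scal _ _ (/ 2)
    (has_expansion_plus _ _ _ _ has_expansion_one_minus Hmu)).
  assert (HV := has_expansion_scal _ _ (/ 2)
    (has_expansion_minus _ _ _ _ Hmu has_expansion_one_minus)).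
  eapply has_expansion_ext_all; [|apply (has_expansion_mean_comp N aN _ _ _ _ HmN HhN HaN
    (has_expansion_ext_coef _ _ _ (fun k => f_equal _ (eq_sym (hseq_spread aM k aM0))) HU)
    (has_expansion_ext_coef _ _ _ (fun k => f_equal _ (eq_sym (shift_gseq_spread aM k aM0))) HV))].
  - intros z. cbv beta. f_equal; field.
  - simpl; lra.
  - unfold shift; simpl; ring.
Qed.

Lemma has_expansion_inner_right :
  has_expansion (fun z => N (M (1 - z) (1 + z)) (1 + z)) (fun k => (-1) ^ k * inner_coef aM aN k).
Proof.
  eapply has_expansion_ext; [|apply (has_expansion_reflect _ _ has_expansion_inner_left)].
  exists 1; split; [lra|]. intros z Hz. apply Rabs_def2 in Hz.
  replace (1 - - z) with (1 + z) by ring. replace (1 + - z) with (1 - z) by ring.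
  rewrite HsM by lra. destruct (HmM (1 - z) (1 + z)) as [Hp _]; try lra.
  apply HsN; lra.
Qed.

Lemma has_expansion_inner_half_sum :
  has_expansion (fun z => / 2 * (N (1 - z) (M (1 - z) (1 + z)) + N (M (1 - z) (1 + z)) (1 + z))) (spread (sseq aM aN)).
Proof.
  eapply has_expansion_ext_coef; [|exact (has_expansion_scal _ _ (/ 2)
    (has_expansion_plus _ _ _ _ has_expansion_inner_left has_expansion_inner_right))].
  intros k. destruct (parity k) as [m [->| ->]].
  - rewrite pow_1_even, spread_even, inner_coef_even. field.
  - rewrite Nat.add_1_r, pow_1_odd, <- Nat.add_1_r, spread_odd. ring.
Qed.

Lemma has_expansion_inner_half_diff :
  has_expansion (fun z => / 2 * (N (M (1 - z) (1 + z)) (1 + z) - N (1 - z) (M (1 - z) (1 + z))))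
    (shift 1 (spread (dseq aM aN))).
Proof.
  eapply has_expansion_ext_coef; [|exact (has_expansion_scal _ _ (/ 2)
    (has_expansion_minus _ _ _ _ has_expansion_inner_right has_expansion_inner_left))].
  intros k. destruct (parity k) as [m [->| ->]].
  - rewrite pow_1_even. destruct m.
    + rewrite shift_lt by lia. ring.
    + rewrite shift_ge by lia. replace (2 * S m - 1)%nat with (2 * m + 1)%nat by lia.
      rewrite spread_odd. ring.
  - rewrite Nat.add_1_r, pow_1_odd, <- Nat.add_1_r, shift_ge by lia.
    replace (2 * m + 1 - 1)%nat with (2 * m)%nat by lia.
    rewrite spread_even, inner_coef_odd. field.
Qed.

End InnerMeans.

Definition resultant_coef (aM aN aK : nat -> R) (m : nat) : R :=
  sum_f_R0 (fun n => aK n *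
    sum_f_R0 (fun k => P k (2 * INR n) (dseq aM aN) * P (m - n - k) (- 2 * INR n + 1) (sseq aM aN))
      (m - n)) m.

Lemma resultant_coef_spread aM aN aK j : aN O = 1 ->
  mean_comp_coef aK (spread (sseq aM aN)) (shift 1 (spread (dseq aM aN))) j =
  spread (resultant_coef aM aN aK) j.
Proof.
  intros HN. pose proof (sseq_0 aM aN HN). pose proof (dseq_0 aM aN HN).
  unfold mean_comp_coef.
  rewrite (sum_eq _ (fun n => aK n * shift (2 * n) (spread (conv (Pseq (2 * INR n) (dseq aM aN))
     (Pseq (-2 * INR n + 1) (sseq aM aN)))) j)).
  2:{ intros n _. f_equal.
      rewrite conv_pow_shift1, conv_pow_spread, conv_shift_l, conv_pow_Pseq_double by lra.
      replace (Pseq (IZR (1 - 2 * Z.of_nat n)) (spread (sseq aM aN)))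
        with (spread (Pseq (-2 * INR n + 1) (sseq aM aN))).
      2:{ extensionality k. unfold Pseq. rewrite P_spread, IZR_1_minus_double by lra. reflexivity. }
      f_equal. extensionality k. apply conv_spread. }
  destruct (parity j) as [m [->| ->]].
  - rewrite spread_even, (sum_f_R0_vanish_above _ m (2 * m));
      [| intros n Hn; rewrite shift_lt by lia; ring | lia].
    unfold resultant_coef. apply sum_eq; intros n Hn. rewrite shift_ge by lia.
    replace (2 * m - 2 * n)%nat with (2 * (m - n))%nat by lia. rewrite spread_even. auto.
  - rewrite spread_odd. apply sum_eq_R0; intros n _.
    destruct (le_lt_dec n m).
    + rewrite shift_ge by lia.
      replace (2 * m + 1 - 2 * n)%nat with (2 * (m - n) + 1)%nat by lia.
      rewrite spread_odd; ring.
    + rewrite shift_lt by lia; ring.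
Qed.

Lemma resultant_homogeneous K N M : is_mean M -> is_homogeneous M -> is_mean N ->
  is_homogeneous N -> is_homogeneous K -> is_homogeneous (resultant K N M).
Proof.
  intros HmM HhM HmN HhN HhK l s t Hl Hs Ht. unfold resultant.
  destruct (HmM s t Hs Ht) as [Hm _].
  destruct (HmN s (M s t) Hs Hm) as [Hn1 _].
  destruct (HmN (M s t) t Hm Ht) as [Hn2 _].
  rewrite HhM, !HhN, HhK by auto. reflexivity.
Qed.

Theorem theorem3p1 (M N K : R -> R -> R) (aM aN aK : nat -> R) :
  is_mean M -> is_symmetric M -> is_homogeneous M -> has_sym_asymp M aM ->
  is_mean N -> is_symmetric N -> is_homogeneous N -> has_sym_asymp N aN ->
  is_mean K -> is_symmetric K -> is_homogeneous K -> has_sym_asymp K aK ->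
  has_sym_asymp (resultant K N M)
    (fun m => sum_f_R0 (fun n => aK n *
        sum_f_R0 (fun k => P k (2 * INR n) (dseq aM aN)
                         * P (m - n - k) (- 2 * INR n + 1) (sseq aM aN))
                 (m - n)) m).
Proof.
  intros HmM HsM HhM HaM HmN HsN HhN HaN HmK HsK HhK HaK.
  assert (aN0 := sym_asymp_coef0 N aN HmN HaN).
  change (has_sym_asymp (resultant K N M) (resultant_coef aM aN aK)).
  apply has_sym_asymp_of_expansion; [apply resultant_homogeneous; auto|].
  eapply has_expansion_ext_coef; [intros k; apply resultant_coef_spread, aN0|].
  (* the two arguments of K are the half sum plus/minus the half difference of the inner means *)
  eapply has_expansion_ext_all; [|apply (has_expansion_mean_comp K aK _ _ _ _ HmK HhK HaK
    (has_expansion_inner_half_sum M N aM aN HmM HsM HhM HaM HmN HsN HhN HaN)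
    (has_expansion_inner_half_diff M N aM aN HmM HsM HhM HaM HmN HsN HhN HaN))].
  - intros z. unfold resultant. f_equal; field.
  - rewrite spread_even with (m := 0%nat), sseq_0; auto; lra.
  - reflexivity.
Qed.
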